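(* Let $\langle\cdot\rangle$ satisfy (A1) (the shifts $a\mapsto a(\cdot+z)$, $z\in\mathbb Z^d$, preserve $\langle\cdot\rangle$), and let $G_T$ be the Green's function. Then for all $T>0$, $a\in\Omega$ and $b\in\mathbb B^d$, $$1+\frac{a(b)}{1-a(b)\nabla\nabla G_T(a,b,b)}\le K\,\omega_0^2(a,b),$$ where $K$ depends only on $d$.
   Context: $\mathbb B^d$ is the set of nearest-neighbour bonds of $\mathbb Z^d$; $x_b,y_b$ endpoints of $b$ with $y_b-x_b\in\{e_1,\dots,e_d\}$; $\nabla u(b)=u(y_b)-u(x_b)$, $\nabla^*F(x)=\sum_i(F(\{x-e_i,x\})-F(\{x,x+e_i\}))$. $\Omega=[0,1]^{\mathbb B^d}$. Green's function: $x\mapsto G_T(a,x,y)$ is the unique $\ell^2(\mathbb Z^d)$ solution of $\frac1TG_T(a,\cdot,y)+\nabla^*(a\nabla G_T(a,\cdot,y))=\delta(\cdot-y)$; $\nabla\nabla G_T(a,b,b)=G_T(a,y_b,y_b)-G_T(a,x_b,y_b)-G_T(a,y_b,x_b)+G_T(a,x_b,x_b)$. Chemical distance $\mathrm{dist}_a(x,y)=\inf\{\sum_{b\in\pi}a(b)^{-1}:\pi$ a path from $x$ to $y\}$ with $1/0=\infty$; $\omega(a,b)=\mathrm{dist}_a(x_b,y_b)^{d+2}$; $a^{b,0}$ is $a$ with $a(b)$ replaced by $0$; $\omega_0(a,b)=\omega(a^{b,0},b)\in[1,\infty]$. *)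

From HB Require Import structures.
From mathcomp Require Import all_boot all_order all_algebra.
From mathcomp Require Import all_classical all_reals all_analysis.
Set Implicit Arguments. Unset Strict Implicit. Unset Printing Implicit Defensive.
Import Order.TTheory GRing.Theory Num.Theory.
Local Open Scope ring_scope.

(* Points of Z^d are integer row vectors; a bond is (x, i) : the bond {x, x + e_i}. *)
Definition point (d : nat) := 'rV[int]_d.
Definition bond (d : nat) := ('rV[int]_d * 'I_d)%type.
Definition unitv (d : nat) (i : 'I_d) : 'rV[int]_d := delta_mx 0 i.
Definition xb (d : nat) (b : bond d) : 'rV[int]_d := b.1.
Definition yb (d : nat) (b : bond d) : 'rV[int]_d := b.1 + unitv b.2.

Definition in_Omega (R : realType) (d : nat) (a : bond d -> R) : Prop :=
  forall b, 0 <= a b <= 1.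

Definition grad (R : realType) (d : nat) (u : 'rV[int]_d -> R) (b : bond d) : R :=
  u (yb b) - u (xb b).

Definition divstar (R : realType) (d : nat) (F : bond d -> R) (x : 'rV[int]_d) : R :=
  \sum_(i < d) (F (x - unitv i, i) - F (x, i)).

Definition is_green (R : realType) (d : nat) (T : R) (a : bond d -> R)
    (G : 'rV[int]_d -> 'rV[int]_d -> R) : Prop :=
  forall y : 'rV[int]_d,
    (\esum_(x in [set: 'rV[int]_d]) ((G x y) ^+ 2)%:E < +oo)%E /\
    forall x : 'rV[int]_d,
      T^-1 * G x y + divstar (fun b => a b * grad (G ^~ y) b) x
      = (if x == y then 1 else 0).

Definition gradgradG (R : realType) (d : nat) (G : 'rV[int]_d -> 'rV[int]_d -> R)
    (b : bond d) : R :=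
  G (yb b) (yb b) - G (xb b) (yb b) - G (yb b) (xb b) + G (xb b) (xb b).

Fixpoint walk (d : nat) (x y : 'rV[int]_d) (s : seq (bond d)) : Prop :=
  match s with
  | [::] => x = y
  | b :: s' => (xb b = x /\ walk (yb b) y s') \/ (yb b = x /\ walk (xb b) y s')
  end.

Definition bcost (R : realType) (d : nat) (a : bond d -> R) (b : bond d) : \bar R :=
  if a b == 0 then +oo%E else ((a b)^-1)%:E.

Definition dist_a (R : realType) (d : nat) (a : bond d -> R) (x y : 'rV[int]_d) : \bar R :=
  ereal_inf [set c | exists s, walk x y s /\ c = (\sum_(b <- s) bcost a b)%E].

Definition omega (R : realType) (d : nat) (a : bond d -> R) (b : bond d) : \bar R :=
  (dist_a a (xb b) (yb b) ^+ d.+2)%E.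

Definition zero_at (R : realType) (d : nat) (a : bond d -> R) (b : bond d) : bond d -> R :=
  fun b' => if b' == b then 0 else a b'.

Definition omega0 (R : realType) (d : nat) (a : bond d -> R) (b : bond d) : \bar R :=
  omega (zero_at a b) b.

(* Let u = G_T(., y_b) - G_T(., x_b), so that g := \nabla\nabla G_T(a,b,b) = \nabla u(b) and
   u/T + \nabla^*(a \nabla u) = \delta_{y_b} - \delta_{x_b}.  Testing this equation against u
   gives the energy bound \sum_{b'} a(b') (\nabla u(b'))^2 <= g; on Z^d this is done against
   truncations of u to finite boxes, the boundary terms being small because G_T(., y) is in
   l^2.  Along a path from x_b to y_b avoiding b, g <= \sum |\nabla u|, and AM-GM with weight
   r = 1 - a(b) g bounds this by (r \sum a^{-1} + r^{-1} \sum a (\nabla u)^2) / 2, while the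
   energy bound gives \sum a (\nabla u)^2 <= g - a(b) g^2 = r g off b.  Hence
   a(b)/r <= 1 + dist_{a^{b,0}}(x_b, y_b), and since this distance is at least 1 the claim
   holds with K = 3. *)

From HB Require Import structures.
From mathcomp Require Import all_boot all_order all_algebra.
From mathcomp Require Import all_classical all_reals all_analysis.
From mathcomp Require Import ring lra.
Set Implicit Arguments. Unset Strict Implicit. Unset Printing Implicit Defensive.
Import Order.TTheory GRing.Theory Num.Theory.
Local Open Scope ring_scope.

Section Sums.
Variable R : realType.

Lemma sum_seq_support (T : eqType) (s t : seq T) (h : T -> R) :
  uniq s -> uniq t -> (forall x, h x != 0 -> (x \in s) && (x \in t)) ->
  \sum_(x <- s) h x = \sum_(x <- t) h x.
Proof.
move=> us ut supp.
have nz r : \sum_(x <- r) h x = \sum_(x <- [seq x <- r | h x != 0]) h x.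
  by rewrite big_filter [RHS]big_mkcond; apply: eq_bigr => x _; case: eqP.
rewrite nz [RHS]nz; apply/perm_big/uniq_perm; rewrite ?filter_uniq // => x.
by rewrite !mem_filter; case: (boolP (h x != 0)) => //= /supp /andP[-> ->].
Qed.

Lemma sum_mul_indicator (T : eqType) (s : seq T) (f : T -> R) y :
  uniq s -> y \in s -> \sum_(x <- s) f x * (if x == y then 1 else 0) = f y.
Proof.
move=> us ys; rewrite (@sum_seq_support _ _ [:: y]) ?big_seq1 ?eqxx ?mulr1 // => x.
by case: ifP => [/eqP->|_]; rewrite ?mulr0 ?eqxx // ys mem_head.
Qed.

Lemma ler_sum_undup (T : eqType) (s : seq T) (h : T -> R) :
  (forall x, x \in s -> 0 <= h x) -> \sum_(x <- undup s) h x <= \sum_(x <- s) h x.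
Proof.
elim: s => [|x s IH] h0 //=; rewrite big_cons.
have IHs : \sum_(y <- undup s) h y <= \sum_(y <- s) h y.
  by apply: IH => y ys; apply: h0; rewrite in_cons ys orbT.
case: ifP => _; last by rewrite big_cons lerD2l.
by apply: le_trans IHs _; rewrite lerDr h0 ?mem_head.
Qed.

Lemma ler_sum_sub_uniq (T : eqType) (s' s : seq T) (h : T -> R) :
  uniq s' -> {subset s' <= s} -> (forall x, x \in s -> 0 <= h x) ->
  \sum_(x <- s') h x <= \sum_(x <- s) h x.
Proof.
move=> us' ss' h0; apply: le_trans (ler_sum_undup h0).
have -> : \sum_(x <- s') h x = \sum_(x <- undup s | x \in s') h x.
  rewrite -[RHS]big_filter; apply/perm_big/uniq_perm; rewrite ?filter_uniq ?undup_uniq //.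
  by move=> x; rewrite mem_filter mem_undup; case: (boolP (x \in s')) => // /ss'.
rewrite [leLHS]big_mkcond /= !big_seq; apply: ler_sum => x xs; case: ifP => // _.
by rewrite h0 // -mem_undup.
Qed.

Lemma amgm_sum (T : eqType) (s : seq T) (al w : T -> R) (r : R) :
  0 < r -> (forall x, x \in s -> 0 < al x) ->
  2 * \sum_(x <- s) `|w x| <=
  r * \sum_(x <- s) (al x)^-1 + (\sum_(x <- s) al x * w x ^+ 2) / r.
Proof.
move=> r0 al0; rewrite mulr_sumr mulr_sumr mulr_suml -big_split /= big_seq_cond.
rewrite [leRHS]big_seq_cond; apply: ler_sum => x /andP[/al0 ax _].
have wx : w x ^+ 2 = `|w x| ^+ 2 by rewrite real_normK // num_real.
rewrite wx -(subr_ge0); set t := `|w x|.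
have -> : r * (al x)^-1 + al x * t ^+ 2 / r - 2 * t = (r - al x * t) ^+ 2 / (al x * r).
  by field; rewrite !gt_eqF.
by rewrite divr_ge0 ?sqr_ge0 // mulr_ge0 // ltW.
Qed.

End Sums.

Section VanishingTail.
Variable R : realType.

Definition vanishing_tail (T : eqType) (f : T -> R) : Prop :=
  forall e, 0 < e -> exists F : seq T, forall M, uniq M ->
    (forall z, z \in M -> z \notin F) -> \sum_(z <- M) f z <= e.

Lemma summable_vanishing_tail (T : choiceType) (f : T -> R) :
  (forall x, 0 <= f x) -> (\esum_(x in [set: T]) (f x)%:E < +oo)%E ->
  vanishing_tail f.
Proof.
move=> f0 fin e e0.
set s := esum _ _ in fin *.
have sfin : s \is a fin_num.
  by rewrite ge0_fin_numE // esum_ge0 // => x _; rewrite lee_fin.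
have : ((fine s - e)%:E < s)%E.
  by rewrite -[X in (_ < X)%E](fineK sfin) lte_fin ltrBlDr ltrDl.
case/ereal_sup_gt => _ [A [finA _] <-] lt.
pose F := finmap.enum_fset (fset_set A).
exists F => M uM dis.
have uFM : uniq (F ++ M).
  rewrite cat_uniq uM finmap.fset_uniq /= andbT; apply/hasPn => z zM; exact: dis.
have : (\sum_(z <- F ++ M) (f z)%:E <= s)%E.
  rewrite fsbig_seq //; apply: ereal_sup_ubound; exists [set` (F ++ M)]%classic => //.
rewrite big_cat /= -fsbig_finite // fsumEFin // sumEFin -EFinD.
move: lt; rewrite -[s](fineK sfin) /= fsumEFin // !lte_fin !lee_fin; lra.
Qed.

Lemma vanishing_tail_sqrB (T : eqType) (f g : T -> R) :
  vanishing_tail (fun x => f x ^+ 2) -> vanishing_tail (fun x => g x ^+ 2) ->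
  vanishing_tail (fun x => (f x - g x) ^+ 2).
Proof.
move=> tf tg e e0.
have e4 : 0 < e / 4 by rewrite divr_gt0.
have [[Ff hf] [Fg hg]] := (tf _ e4, tg _ e4).
exists (Ff ++ Fg) => M uM dis.
have [disf disg] : (forall z, z \in M -> z \notin Ff) /\ (forall z, z \in M -> z \notin Fg).
  by split=> z /dis; rewrite mem_cat negb_or => /andP[].
have := hf M uM disf; have := hg M uM disg.
have : \sum_(z <- M) (f z - g z) ^+ 2 <=
       2 * \sum_(z <- M) f z ^+ 2 + 2 * \sum_(z <- M) g z ^+ 2.
  rewrite !mulr_sumr -big_split /=; apply: ler_sum => z _.
  by have := sqr_ge0 (f z + g z); nra.
lra.
Qed.

End VanishingTail.

Section Walks.
Variables (R : realType) (d : nat).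
Implicit Types (s : seq (bond d)) (x y : 'rV[int]_d) (a : bond d -> R).

Lemma walk_increment_le (u : 'rV[int]_d -> R) s x y : walk x y s ->
  `|u y - u x| <= \sum_(b <- s) `|grad u b|.
Proof.
elim: s x => [|b s IH] x /=; first by move=> ->; rewrite subrr normr0 big_nil.
rewrite big_cons /grad => -[[<- /IH w]|[<- /IH w]].
  rewrite (_ : u y - u (xb b) = (u (yb b) - u (xb b)) + (u y - u (yb b))); last by ring.
  by apply: le_trans (ler_normD _ _) _; apply: lerD.
rewrite (_ : u y - u (yb b) = - (u (yb b) - u (xb b)) + (u y - u (xb b))); last by ring.
by apply: le_trans (ler_normD _ _) _; rewrite normrN; apply: lerD.
Qed.

Lemma walk_split s x y c : walk x y s -> c \in s ->
  exists p q, s = p ++ c :: q /\ (walk (yb c) y q \/ walk (xb c) y q).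
Proof.
elim: s x => [|c' s IH] x //= w; rewrite in_cons => /orP[/eqP Ec|cs].
  by subst; exists [::], s; split=> //; case: w => -[_ w]; [left|right].
by case: w => -[_ /IH/(_ cs) [p [q [-> H]]]]; exists (c' :: p), q.
Qed.

Lemma walk_from_endpoint c x y q : xb c = x \/ yb c = x ->
  walk (yb c) y q \/ walk (xb c) y q -> walk x y q \/ walk x y (c :: q).
Proof. by move=> [<-|<-] [w|w] /=; tauto. Qed.

Lemma walk_loop_erase s x y : walk x y s ->
  exists s', [/\ walk x y s', uniq s' & {subset s' <= s}].
Proof.
elim: s x => [|c s IH] x /=; first by move=> ->; exists [::].
move=> wc; have [ends [x' [w' back]]] : (xb c = x \/ yb c = x) /\
    exists x', walk x' y s /\ forall s2, walk x' y s2 -> walk x y (c :: s2).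
  by case: wc => -[<- w]; split; [left|exists (yb c)|right|exists (xb c)] => //=; auto.
have [s2 [w2 u2 ss2]] := IH _ w'.
have sub_cons t : t \in c :: s2 -> t \in c :: s.
  by rewrite !in_cons => /orP[->|/ss2->]; rewrite ?orbT.
case: (boolP (c \in s2)) => cs2; last first.
  by exists (c :: s2); split; [exact: back | rewrite /= cs2 | exact: sub_cons].
have [p [q [E wq]]] := walk_split w2 cs2.
move: u2; rewrite E cat_uniq /= => /and4P[_ _ cq uq].
have qs : {subset q <= c :: s}.
  by move=> t tq; apply: sub_cons; rewrite in_cons E mem_cat in_cons tq !orbT.
have [w''|w''] := walk_from_endpoint ends wq; [exists q | exists (c :: q)]; split=> //.
- by rewrite /= cq.
- by move=> t; rewrite in_cons => /orP[/eqP->|/qs//]; rewrite mem_head.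
Qed.

Lemma sum_bcost_pos a s : (forall b, b \in s -> 0 < a b) ->
  (\sum_(b <- s) bcost a b = (\sum_(b <- s) (a b)^-1)%:E)%E.
Proof.
move=> apos; rewrite -sumEFin big_seq [RHS]big_seq; apply: eq_bigr => b /apos ab.
by rewrite /bcost gt_eqF.
Qed.

Lemma sum_bcost_zero a s b : (forall b, 0 <= a b) -> b \in s -> a b = 0 ->
  (\sum_(b <- s) bcost a b = +oo)%E.
Proof.
move=> a0 bs ab; rewrite (big_rem b) //= {1}/bcost ab eqxx addye //.
rewrite gt_eqF // (lt_le_trans ltNy0) // sume_ge0 // => c _.
by rewrite /bcost; case: eqP => // _; rewrite lee_fin invr_ge0.
Qed.

Lemma dist_a_ge a x y (c : R) : (forall b, 0 <= a b) ->
  (forall s, walk x y s -> uniq s -> (forall b, b \in s -> 0 < a b) ->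
     c <= \sum_(b <- s) (a b)^-1) ->
  (c%:E <= dist_a a x y)%E.
Proof.
move=> a0 hc; apply/ereal_infP => _ [s [w ->]].
have [/allP apos|] := boolP (all (fun b => 0 < a b) s); last first.
  case/allPn => b bs; rewrite lt_def a0 andbT negbK => /eqP ab.
  by rewrite (sum_bcost_zero a0 bs ab) leey.
rewrite sum_bcost_pos // lee_fin.
have [s' [w' us' ss']] := walk_loop_erase w.
apply: le_trans (hc s' w' us' (fun b bs' => apos b (ss' b bs'))) _.
by apply: ler_sum_sub_uniq => // b _; rewrite invr_ge0.
Qed.

Lemma dist_a_ge1 a x y : in_Omega a -> x != y -> (1%:E <= dist_a a x y)%E.
Proof.
move=> aO xy; apply: dist_a_ge => [b|[|c s] w _ apos]; first by case/andP: (aO b).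
  by rewrite w eqxx in xy.
have ac1 : 1 <= (a c)^-1 by rewrite invf_ge1 ?apos ?mem_head //; case/andP: (aO c).
rewrite big_cons -[1]addr0 lerD // sumr_ge0 // => b _.
by rewrite invr_ge0; case/andP: (aO b).
Qed.

End Walks.

Section Lattice.
Variables (R : realType) (d : nat).
Implicit Types (F B L : seq 'rV[int]_d) (z w : 'rV[int]_d).

Definition nbhd F : seq 'rV[int]_d :=
  undup (F ++ [seq z + unitv i | z <- F, i <- index_enum 'I_d]
           ++ [seq z - unitv i | z <- F, i <- index_enum 'I_d]).

Lemma nbhd_uniq F : uniq (nbhd F).
Proof. exact: undup_uniq. Qed.

Lemma mem_nbhd F z : z \in F -> z \in nbhd F.
Proof. by move=> zF; rewrite mem_undup mem_cat zF. Qed.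

Lemma mem_nbhdD F z i : z \in F -> z + unitv i \in nbhd F.
Proof.
move=> zF; rewrite mem_undup !mem_cat; apply/or3P/Or32.
by apply: (allpairs_f (fun z i => z + unitv i)); rewrite ?mem_index_enum.
Qed.

Lemma mem_nbhdB F z i : z \in F -> z - unitv i \in nbhd F.
Proof.
move=> zF; rewrite mem_undup !mem_cat; apply/or3P/Or33.
by apply: (allpairs_f (fun z i => z - unitv i)); rewrite ?mem_index_enum.
Qed.

Definition bonds_of L : seq (bond d) := [seq (w, i) | w <- L, i <- index_enum 'I_d].

Lemma mem_bonds_of L b : (b \in bonds_of L) = (xb b \in L).
Proof.
case: b => w i; apply/allpairsP/idP => [[[w' i'] [wL _ [-> _]]] // | wL].
by exists (w, i); rewrite mem_index_enum.
Qed.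

Lemma sum_bonds_of L (f : bond d -> R) :
  \sum_(b <- bonds_of L) f b = \sum_(i < d) \sum_(w <- L) f (w, i).
Proof. by rewrite big_allpairs exchange_big. Qed.

Lemma sum_mul_divstar (F : bond d -> R) (psi : 'rV[int]_d -> R) B :
  uniq B -> (forall z, z \notin B -> psi z = 0) ->
  \sum_(z <- B) psi z * divstar F z =
  \sum_(b <- bonds_of (nbhd B)) F b * grad psi b.
Proof.
move=> uB psi0; rewrite sum_bonds_of /divstar.
under eq_bigr => z _ do rewrite mulr_sumr.
rewrite exchange_big /=; apply: eq_bigr => i _.
under eq_bigr => z _ do rewrite mulrBr.
have supp z (c : R) : psi z * c != 0 -> z \in B.
  by apply: contraR => /psi0->; rewrite mul0r eqxx.
have shifted : \sum_(z <- B) psi z * F (z - unitv i, i) =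
               \sum_(w <- nbhd B) psi (w + unitv i) * F (w, i).
  rewrite (@sum_seq_support _ _ _ [seq w + unitv i | w <- nbhd B]) ?big_map.
  - by apply: eq_bigr => w _; rewrite addrK.
  - exact: uB.
  - by rewrite map_inj_uniq ?nbhd_uniq // => ? ? /addIr.
  - move=> z /supp zB; rewrite zB; apply/mapP; exists (z - unitv i); last by rewrite subrK.
    exact: mem_nbhdB.
have centred : \sum_(z <- B) psi z * F (z, i) = \sum_(w <- nbhd B) psi w * F (w, i).
  apply: sum_seq_support; rewrite ?nbhd_uniq // => z /supp zB.
  by rewrite zB mem_nbhd.
by rewrite sumrB shifted centred -sumrB; apply: eq_bigr => w _; rewrite /grad /=; ring.
Qed.

End Lattice.

Section Energy.
Variables (R : realType) (d : nat) (T : R) (a : bond d -> R).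
Variables (u : 'rV[int]_d -> R) (x0 y0 : 'rV[int]_d).
Hypotheses (T_gt0 : 0 < T) (a_Omega : in_Omega a).
Hypothesis u_eq : forall z, T^-1 * u z + divstar (fun b => a b * grad u b) z =
  (if z == y0 then 1 else 0) - (if z == x0 then 1 else 0).
Hypothesis u_tail : vanishing_tail (fun z => u z ^+ 2).

Let a_ge0 b : 0 <= a b. Proof. by case/andP: (a_Omega b). Qed.
Let a_le1 b : a b <= 1. Proof. by case/andP: (a_Omega b). Qed.

(* Testing the equation against [psi], the truncation of [u] to the neighbourhood [B] of
   [F0], gives the energy identity up to bonds leaving [B]; their contribution is bounded
   by [penalty], which only sees the values of [u] off [F0]. *)
Section Truncation.
Variable F0 : seq 'rV[int]_d.

Let B := nbhd F0.
Let psi z := if z \in B then u z else 0.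
Let penalty z := if z \notin F0 then 2 * u z ^+ 2 else 0.
Let inner_energy b :=
  if (xb b \in B) && (yb b \in B) then a b * grad u b ^+ 2 else 0.

Let penalty_ge0 z : 0 <= penalty z.
Proof. by rewrite /penalty; case: ifP => // _; rewrite mulr_ge0 ?sqr_ge0. Qed.

Lemma bond_energy_lower b :
  inner_energy b - (penalty (xb b) + penalty (yb b)) <= a b * grad u b * grad psi b.
Proof.
case: b => w i; rewrite /inner_energy /grad /psi /xb /yb /=; set z := w + unitv i.
have nearF0 : (w \in F0) || (z \in F0) -> (w \in B) && (z \in B).
  case/orP => [wF|zF]; first by rewrite mem_nbhd // mem_nbhdD.
  by rewrite [z \in B]mem_nbhd // andbT -[w](addrK (unitv i)) mem_nbhdB.
have [/andP[wB zB]|notB] := boolP ((w \in B) && (z \in B)).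
  by rewrite wB zB /= expr2 mulrA lerBlDr lerDl addr_ge0 ?penalty_ge0.
have /norP[wF zF] := contra nearF0 notB.
move: notB; rewrite /penalty wF zF.
have a1 : 0 <= 1 - a (w, i) by rewrite subr_ge0 a_le1.
have := mulr_ge0 (a_ge0 (w, i)) (sqr_ge0 (u z - u w)).
have := mulr_ge0 a1 (sqr_ge0 (u w)); have := mulr_ge0 a1 (sqr_ge0 (u z)).
have := sqr_ge0 (u w); have := sqr_ge0 (u z).
by case: (w \in B); case: (z \in B) => //= _; nra.
Qed.

Lemma energy_truncated S : uniq S ->
  (forall b, b \in S -> (xb b \in F0) && (yb b \in F0)) -> x0 \in F0 -> y0 \in F0 ->
  \sum_(b <- S) a b * grad u b ^+ 2 <=
  u y0 - u x0 + \sum_(b <- bonds_of (nbhd B)) (penalty (xb b) + penalty (yb b)).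
Proof.
move=> uS SF x0F y0F.
have uB : uniq B := nbhd_uniq F0.
have psiB z : z \in B -> psi z = u z by rewrite /psi => ->.
have psi0 z : z \notin B -> psi z = 0 by rewrite /psi => /negbTE->.
set bonds := bonds_of (nbhd B).
have g_eq : u y0 - u x0 = \sum_(z <- B) T^-1 * u z ^+ 2 +
    \sum_(b <- bonds) a b * grad u b * grad psi b.
  have -> : \sum_(z <- B) T^-1 * u z ^+ 2 = \sum_(z <- B) psi z * (T^-1 * u z).
    by rewrite big_seq [RHS]big_seq; apply: eq_bigr => z /psiB->; ring.
  rewrite (eq_bigr (fun b => a b * grad u b * grad psi b)) // -sum_mul_divstar //.
  rewrite -big_split /=.
  under eq_bigr => z _ do rewrite -mulrDr u_eq mulrBr.
  by rewrite sumrB !sum_mul_indicator ?mem_nbhd // !psiB ?mem_nbhd.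
have energy_S : \sum_(b <- S) a b * grad u b ^+ 2 <=
    \sum_(b <- bonds) inner_energy b.
  rewrite [leLHS](eq_big_seq inner_energy); last first.
    by move=> b /SF /andP[xF yF]; rewrite /inner_energy !mem_nbhd.
  apply: ler_sum_sub_uniq => //.
    by move=> b /SF /andP[xF _]; rewrite mem_bonds_of !mem_nbhd.
  by move=> b _; rewrite /inner_energy; case: ifP => // _; rewrite mulr_ge0 ?sqr_ge0.
have : \sum_(b <- bonds) (inner_energy b - (penalty (xb b) + penalty (yb b))) <=
       \sum_(b <- bonds) a b * grad u b * grad psi b.
  by apply: ler_sum => b _; apply: bond_energy_lower.
rewrite sumrB.
have : 0 <= \sum_(z <- B) T^-1 * u z ^+ 2.
  by rewrite sumr_ge0 // => z _; rewrite mulr_ge0 ?sqr_ge0 // invr_ge0 ltW.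
lra.
Qed.

Lemma penalty_sum_le (F1 L : seq 'rV[int]_d) (e : R) : {subset F1 <= F0} ->
  (forall M, uniq M -> (forall z, z \in M -> z \notin F1) ->
     \sum_(z <- M) u z ^+ 2 <= e) ->
  uniq L -> \sum_(b <- bonds_of L) (penalty (xb b) + penalty (yb b)) <= 4 * d%:R * e.
Proof.
move=> F1F0 tail uL.
have penalty_le M : uniq M -> \sum_(z <- M) penalty z <= 2 * e.
  move=> uM; rewrite -big_mkcond -big_filter -mulr_sumr ler_pM2l //.
  apply: tail; first exact: filter_uniq.
  by move=> z; rewrite mem_filter => /andP[/(contra (@F1F0 z))].
have per_direction (i : 'I_d) :
    \sum_(w <- L) (penalty w + penalty (w + unitv i)) <= 4 * e.
  have := penalty_le L uL.
  have := penalty_le [seq w + unitv i | w <- L].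
  rewrite big_map map_inj_uniq // => [|? ? /addIr//] /(_ uL).
  rewrite big_split /=; lra.
rewrite sum_bonds_of; apply: le_trans (ler_sum _ (fun i _ => per_direction i)) _.
by rewrite sumr_const card_ord -mulr_natl; nra.
Qed.

End Truncation.

Lemma energy_le S : uniq S -> \sum_(b <- S) a b * grad u b ^+ 2 <= u y0 - u x0.
Proof.
move=> uS; apply/ler_addgt0Pr => e e0.
have c_gt0 : 0 < 4 * d%:R + 1 :> R by rewrite ltr_wpDl // mulr_ge0.
have [F1 tail] := u_tail (divr_gt0 e0 c_gt0).
pose F0 := F1 ++ [:: x0, y0 & [seq xb b | b <- S] ++ [seq yb b | b <- S]].
have F1F0 : {subset F1 <= F0} by move=> z zF1; rewrite mem_cat zF1.
apply: le_trans (energy_truncated (F0 := F0) uS _ _ _) _.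
- move=> b bS; rewrite !mem_cat !in_cons !mem_cat.
  by rewrite (map_f (@xb d) bS) (map_f (@yb d) bS) !orbT.
- by rewrite mem_cat mem_head orbT.
- by rewrite mem_cat !in_cons eqxx !orbT.
rewrite lerD2l; apply: le_trans (penalty_sum_le F1F0 tail (nbhd_uniq _)) _.
rewrite mulrA ler_pdivrMr //; nra.
Qed.

End Energy.

Section Green.
Variables (R : realType) (d : nat).
Implicit Types (T : R) (a : bond d -> R) (G : 'rV[int]_d -> 'rV[int]_d -> R).

Lemma xb_neq_yb (b : bond d) : xb b != yb b.
Proof.
apply/eqP => /(congr1 (fun M : 'rV[int]_d => (M - xb b) 0 b.2)).
by rewrite subrr /yb /xb addrAC subrr add0r !mxE !eqxx.
Qed.

Lemma in_Omega_zero_at a b : in_Omega a -> in_Omega (zero_at a b).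
Proof. by move=> aO b'; rewrite /zero_at; case: ifP => // _; rewrite lexx ler01. Qed.

Lemma green_dipole_eq T a G x y : is_green T a G -> forall z,
  T^-1 * (G z y - G z x) + divstar (fun b => a b * grad (fun w => G w y - G w x) b) z =
  (if z == y then 1 else 0) - (if z == x then 1 else 0).
Proof.
move=> hG z; rewrite -(proj2 (hG y) z) -(proj2 (hG x) z) /divstar /grad.
rewrite opprD addrACA -mulrBr -sumrB; congr (_ + _); apply: eq_bigr => i _; ring.
Qed.

Lemma green_dipole_energy T a G b S : 0 < T -> in_Omega a -> is_green T a G ->
  uniq S ->
  \sum_(b' <- S) a b' * grad (fun z => G z (yb b) - G z (xb b)) b' ^+ 2 <= gradgradG G b.
Proof.
move=> T0 aO hG; have -> : gradgradG G b =
    (G (yb b) (yb b) - G (yb b) (xb b)) - (G (xb b) (yb b) - G (xb b) (xb b)).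
  by rewrite /gradgradG; ring.
apply: (energy_le T0 aO (green_dipole_eq (xb b) (yb b) hG)).
apply: vanishing_tail_sqrB; apply: summable_vanishing_tail (proj1 (hG _)) => z;
  exact: sqr_ge0.
Qed.

End Green.

(* [al = a(b)], [g = \nabla\nabla G_T(b)], [c] the cost of a path avoiding [b] and [E] the
   energy along it. *)
Lemma bond_ratio_le (R : realType) (al g c E : R) :
  0 <= al <= 1 -> 0 <= c -> 0 <= E -> al * g ^+ 2 + E <= g ->
  (0 < 1 - al * g -> 2 * g <= (1 - al * g) * c + E / (1 - al * g)) ->
  al / (1 - al * g) <= 1 + c.
Proof.
move=> /andP[al0 al1] c0 E0 energy amgm.
have [r_le0|r_gt0] := leP (1 - al * g) 0.
  have : al / (1 - al * g) <= 0 by rewrite mulr_ge0_le0 // invr_le0.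
  lra.
have E_le : E / (1 - al * g) <= g by rewrite ler_pdivrMr //; nra.
have g_le : g <= (1 - al * g) * c by have := amgm r_gt0; lra.
rewrite ler_pdivrMr //; nra.
Qed.

Lemma ereal_le_three_sqr_pow (R : realType) (v : R) (D : \bar R) (n : nat) :
  (1%:E <= D)%E -> ((v - 1)%:E <= D)%E -> ((1 + v)%:E <= 3%:E * (D ^+ n.+1) ^+ 2)%E.
Proof.
case: D => [r||] //; rewrite ?lee_fin => r1 vr; last first.
  have expy k : ((+oo : \bar R) ^+ k.+1 = +oo)%E by elim: k => // k IH; rewrite expeS IH.
  by rewrite !expy mulry gtr0_sg // mul1e leey.
have r_le : r <= (r ^+ n.+1) ^+ 2.
  by apply: le_trans (ler_eXnr _ r1) (ler_eXnr _ (exprn_ege1 _ r1)).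
rewrite -!EFin_expe -EFinM lee_fin; lra.
Qed.

Lemma green_ratio_le_dist (R : realType) (d : nat) (T : R) (a : bond d -> R)
    (G : 'rV[int]_d -> 'rV[int]_d -> R) (b : bond d) :
  0 < T -> in_Omega a -> is_green T a G ->
  ((a b / (1 - a b * gradgradG G b) - 1)%:E <= dist_a (zero_at a b) (xb b) (yb b))%E.
Proof.
move=> T0 aO hG; set u := fun z => G z (yb b) - G z (xb b).
have g_eq : gradgradG G b = grad u b by rewrite /gradgradG /grad /u; ring.
apply: dist_a_ge => [b'|s w us apos]; first by case/andP: (in_Omega_zero_at b aO b').
have bs : b \notin s by apply/negP => /apos; rewrite /zero_at eqxx ltxx.
have za : {in s, zero_at a b =1 a}.
  by move=> b' b's; rewrite /zero_at; case: eqP => // eb; rewrite -eb b's in bs.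
have a_pos : forall b', b' \in s -> 0 < a b' by move=> b' b's; rewrite -za ?apos.
have ubs : uniq (b :: s) by rewrite /= bs us.
have := green_dipole_energy b T0 aO hG ubs; rewrite big_cons -/u -g_eq => energy.
rewrite (eq_big_seq (fun b' => (a b')^-1)) => [|b' /za ->//].
rewrite lerBlDl; apply: bond_ratio_le energy _ => //.
- by rewrite big_seq sumr_ge0 // => b' /a_pos/ltW; rewrite invr_ge0.
- by rewrite sumr_ge0 // => b' _; rewrite mulr_ge0 ?sqr_ge0 //; case/andP: (aO b').
move=> r_gt0; apply: le_trans (amgm_sum (grad u) r_gt0 a_pos).
rewrite ler_pM2l // g_eq; apply: le_trans (ler_norm _) (walk_increment_le u w).
Qed.

Theorem lemma9 (R : realType) (d : nat) :
  exists K : R, 0 < K /\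
  forall (T : R) (a : bond d -> R) (G : 'rV[int]_d -> 'rV[int]_d -> R) (b : bond d),
    0 < T -> in_Omega a -> is_green T a G ->
    ((1 + a b / (1 - a b * gradgradG G b))%:E <= K%:E * omega0 a b ^+ 2)%E.
Proof.
exists 3; split => // T a G b T0 aO hG.
apply: ereal_le_three_sqr_pow (green_ratio_le_dist b T0 aO hG).
exact: dist_a_ge1 (in_Omega_zero_at b aO) (xb_neq_yb b).
Qed.
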